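(* Let $X$ be a Peano continuum and $f:X\to X$ a cw-expansive homeomorphism with cw-expansivity constant $\alpha>0$. Then a point $x\in X$ is a sink if and only if $CW^s_{\alpha/2}(x)$ is a neighborhood of $x$.
   Context: A Peano continuum is a compact, connected, locally connected metric space $(X,d)$ with more than one point. A homeomorphism $f:X\to X$ of a compact metric space is continuum-wise expansive (cw-expansive) with cw-expansivity constant $\alpha>0$ if $\sup_{n\in\mathbb Z}\operatorname{diam} f^n(C)>\alpha$ for every continuum $C\subset X$ containing more than one point. For $\varepsilon>0$ and $x\in X$: $W^s_\varepsilon(x)=\{y\in X:\ d(f^n(x),f^n(y))\le\varepsilon \text{ for all } n\ge 0\}$; $CW^s_\varepsilon(x)$ is the connected component of $W^s_\varepsilon(x)$ containing $x$; $W^s(x)=\{y\in X:\ d(f^n(x),f^n(y))\to 0 \text{ as } n\to\infty\}$. A point $x$ is a weak sink if $W^s_\varepsilon(x)$ is a neighborhood of $x$ for every $\varepsilon>0$; $x$ is a sink if it is a weak sink and there exists $\varepsilon>0$ with $W^s_\varepsilon(x)\subset W^s(x)$. (Sinks are not required to be periodic.) *)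

From HB Require Import structures.
From mathcomp Require Import all_boot all_order all_algebra.
From mathcomp Require Import all_classical all_reals all_analysis.
Set Implicit Arguments. Unset Strict Implicit. Unset Printing Implicit Defensive.
Import Order.TTheory GRing.Theory Num.Theory numFieldNormedType.Exports.
Local Open Scope classical_set_scope.
Local Open Scope ring_scope.

Section Defs.
Context {R : realType} {X : metricType R}.

Definition locally_connected_space : Prop :=
  forall (x : X) (U : set X), nbhs x U ->
    exists V : set X, [/\ open V, connected V, V x & V `<=` U].

Definition more_than_one_point (A : set X) : Prop :=
  exists x y, [/\ A x, A y & x <> y].

Definition peano_continuum : Prop :=
  [/\ compact [set: X], connected [set: X], locally_connected_space
    & more_than_one_point [set: X]].

Definition continuum (C : set X) : Prop :=
  [/\ C !=set0, compact C & connected C].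

Definition homeomorphism (f : X -> X) : Prop :=
  exists g : X -> X, [/\ cancel f g, cancel g f, continuous f & continuous g].

Definition diam (A : set X) : \bar R :=
  ereal_sup [set z | exists x y, [/\ A x, A y & z = (mdist x y)%:E]].

(* image of A under f^n, n an integer; for negative n, f^n(A) is the preimage
   of A under f^(-n) (this is f^n(A) when f is bijective) *)
Definition zimage (f : X -> X) (n : int) (A : set X) : set X :=
  match n with
  | Posz k => iter k f @` A
  | Negz k => iter k.+1 f @^-1` A
  end.

Definition cw_expansive (f : X -> X) (alpha : R) : Prop :=
  forall C : set X, continuum C -> more_than_one_point C ->
    (alpha%:E < ereal_sup (range (fun n : int => diam (zimage f n C))))%E.

Definition Ws_eps (f : X -> X) (eps : R) (x : X) : set X :=
  [set y | forall n : nat, mdist (iter n f x) (iter n f y) <= eps].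

Definition CWs_eps (f : X -> X) (eps : R) (x : X) : set X :=
  connected_component (Ws_eps f eps x) x.

Definition Ws (f : X -> X) (x : X) : set X :=
  [set y | (fun n : nat => mdist (iter n f x) (iter n f y)) @ \oo --> (0 : R)].

Definition weak_sink (f : X -> X) (x : X) : Prop :=
  forall eps : R, 0 < eps -> nbhs x (Ws_eps f eps x).

Definition sink (f : X -> X) (x : X) : Prop :=
  weak_sink f x /\ exists2 eps : R, 0 < eps & Ws_eps f eps x `<=` Ws f x.

End Defs.

From HB Require Import structures.
From mathcomp Require Import all_boot all_order all_algebra.
From mathcomp Require Import all_classical all_reals all_analysis.
From mathcomp Require Import lra.
Import Order.TTheory GRing.Theory Num.Theory numFieldNormedType.Exports.
Local Open Scope classical_set_scope.
Local Open Scope ring_scope.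

(* A weak sink has, by local connectedness, a connected neighbourhood inside
   W^s_{alpha/2}(x), hence inside CW^s_{alpha/2}(x).  Conversely, let V be a
   connected open neighbourhood of x inside CW^s_{alpha/2}(x).  It suffices to
   show that d(f^n x, f^n y) -> 0 uniformly in y in V.  Otherwise there are
   e > 0, a cluster point p of the times n at which f^n(V) has a point e-far
   from f^n x, and the upper limit L of the connected sets f^n(V) along these
   times is a continuum containing p and a point q with d(p, q) >= e.  Since
   every f^k(f^n V) (k in Z, n large) lies within alpha/2 of f^k(f^n x), every
   f^k(L) lies within alpha/2 of f^k(p), so has diameter at most alpha,
   contradicting cw-expansivity. *)

Lemma iter_cancel {T : Type} {f g : T -> T} n :
  cancel f g -> cancel (iter n f) (iter n g).
Proof. by move=> fK; elim: n => // n IHn w; rewrite iterSr iterS fK IHn. Qed.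

Section topology_facts.
Context {T : topologicalType}.

Lemma continuous_iter {f : T -> T} n : continuous f -> continuous (iter n f).
Proof.
move=> cf; elim: n => [|n IHn] x /=; first exact: cvg_id.
exact: (continuous_comp (IHn x) (cf _)).
Qed.

Lemma compact_directed_cluster {I : Type} (D : set I) (B : I -> set T) :
  compact [set: T] -> (exists i, D i) ->
  (forall i j, D i -> D j -> exists2 k, D k & B k `<=` B i `&` B j) ->
  (forall i, D i -> B i !=set0) ->
  exists p : T, forall i, D i -> forall W, nbhs p W -> B i `&` W !=set0.
Proof.
move=> cpt Dne dir ne.
have FF := filter_from_filter Dne dir.
have [p [_ clp]] := cpt _ (filter_from_proper FF ne) filterT.
by exists p => i Di W pW; apply: clp => //; exists i.
Qed.

Lemma connected_open_gap {E U V : set T} : connected E -> open U -> open V ->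
  U `&` V = set0 -> E `&` U !=set0 -> E `&` V !=set0 ->
  E `\` (U `|` V) !=set0.
Proof.
move=> cE oU oV UV0 EU [z [Ez Vz]]; apply: contrapT => /set0P/negP/negPn/eqP.
rewrite setD_eq0 => EUV.
have EUE : E `&` U = E.
  apply: cE => //; first by exists U.
  exists (~` V); first exact: open_closedC.
  apply/seteqP; split => w [Ew Ww]; split => //.
    by move=> Vw; have : (U `&` V) w by []; rewrite UV0.
  by case: (EUV _ Ew).
have : (U `&` V) z by split => //; rewrite -EUE in Ez; case: Ez.
by rewrite UV0.
Qed.

Lemma separated_closedl {A B : set T} :
  closed (A `|` B) -> separated A B -> closed A.
Proof.
move=> cAB [sAB _] z clAz.
have [//|Bz] : (A `|` B) z by apply: cAB; exact: closureS clAz.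
by have : (closure A `&` B) z by []; rewrite sAB.
Qed.

End topology_facts.

(* The upper limit of the sets P n along the times n at which a n tends to p. *)
Definition limit_along {R : realType} {X : metricType R} (a : nat -> X) (p : X)
    (P : nat -> set X) : set X :=
  [set z | forall N W U, nbhs p W -> nbhs z U ->
    exists n, [/\ (N <= n)%N, W (a n) & P n `&` U !=set0]].

Section limit_along.
Context {R : realType} {X : metricType R} {a : nat -> X} {p : X}.
Local Notation d := (@mdist R X).
Local Notation limit_along := (limit_along a p).

Lemma limit_alongS {P Q : nat -> set X} :
  (forall n, P n `<=` Q n) -> limit_along P `<=` limit_along Q.
Proof.
move=> PQ z Lz N W U pW zU; have [n [Nn Wn [w [Pw Uw]]]] := Lz N W U pW zU.
by exists n; split => //; exists w; split => //; exact: PQ.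
Qed.

Lemma limit_along_closed P : closed (limit_along P).
Proof.
move=> z clz N W U pW zU.
have [w [Lw Uw]] := clz _ (nbhs_interior zU).
exact: Lw N W U pW Uw.
Qed.

Lemma limit_along_nonempty {P : nat -> set X} : compact [set: X] ->
  (forall N W, nbhs p W -> exists n, [/\ (N <= n)%N, W (a n) & P n !=set0]) ->
  limit_along P !=set0.
Proof.
move=> cpt Pfreq.
pose B (i : nat * set X) :=
  [set z | exists n, [/\ (i.1 <= n)%N, i.2 (a n) & P n z]].
have [r clr] : exists r : X, forall i : nat * set X, nbhs p i.2 ->
    forall U, nbhs r U -> B i `&` U !=set0.
  apply: (compact_directed_cluster (fun i => nbhs p i.2) B cpt).
  - by exists (0%N, setT); exact: filterT.
  - move=> [N1 W1] [N2 W2] /= pW1 pW2; exists (maxn N1 N2, W1 `&` W2).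
      exact: filterI.
    move=> z [n [/= Nn [W1n W2n] Pz]].
    by split; exists n; split => //; apply: leq_trans Nn;
      rewrite ?leq_maxl ?leq_maxr.
  - move=> [N W] /= pW; have [n [Nn Wn [z Pz]]] := Pfreq N W pW.
    by exists z, n.
exists r => N W U pW rU; have [z [[n [Nn Wn Pz]] Uz]] := clr (N, W) pW U rU.
by exists n; split => //; exists z.
Qed.

Lemma limit_along_connected (S : nat -> set X) : compact [set: X] ->
  (forall n, connected (S n)) -> (forall n, S n (a n)) ->
  limit_along S p -> connected (limit_along S).
Proof.
move=> cpt cS Sa Lp; apply: contrapT => /connectedPn [E [E0 LE sepE]].
wlog Ep : E E0 LE sepE / E false p.
  move=> wlogE; move: (Lp); rewrite LE => -[Efp|Etp]; first exact: (wlogE E).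
  apply: (wlogE (fun b => E (~~ b))) => //=.
  - by rewrite setUC.
  - by rewrite separatedC.
have clL := limit_along_closed S; rewrite LE in clL.
have clEf : closed (E false) by exact: separated_closedl clL sepE.
have clEt : closed (E true).
  apply: (separated_closedl (B := E false)); first by rewrite setUC.
  by rewrite separatedC.
have [U [U' [oU oU' EU EU' UU'0]]] := (@normal_openP R X).1
  (compact_normal (@metric_hausdorff _ X) cpt) _ _ clEf clEt
  (separated_disjoint sepE).
have [b Etb] := E0 true.
have gap N W : nbhs p W ->
    exists n, [/\ (N <= n)%N, W (a n) & S n `\` (U `|` U') !=set0].
  move=> pW; have Lb : limit_along S b by rewrite LE; right.
  have pU : nbhs p U by apply: open_nbhs_nbhs; split => //; exact: EU.
  have bU' : nbhs b U' by apply: open_nbhs_nbhs; split => //; exact: EU'.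
  have [n [Nn [Wn Un] SU']] := Lb N (W `&` U) U' (filterI pW pU) bU'.
  by exists n; split => //; apply: connected_open_gap => //; exists (a n).
have [r Lr] := limit_along_nonempty cpt gap.
have rUU' : (U `|` U') r.
  have : limit_along S r by apply: limit_alongS Lr => n w [].
  by rewrite LE => -[/EU|/EU']; [left|right].
have [n [_ _ [w [[_ nUw] Uw]]]] := Lr 0%N setT _ filterT
  (open_nbhs_nbhs (conj (openU oU oU') rUU')).
exact: nUw.
Qed.

Lemma limit_along_mdist_ge {P : nat -> set X} {e : R} {z : X} :
  (forall n w, P n w -> e < d (a n) w) -> limit_along P z -> e <= d p z.
Proof.
move=> Pe Lz; rewrite leNgt; apply/negP => ze.
pose eta := (e - d p z) / 2.
have eta0 : 0 < eta by rewrite divr_gt0 // subr_gt0.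
have near_dist (c : X) : nbhs c [set w | d c w < eta].
  by rewrite -metricType_numDomainType.filter_from_mdist_nbhs; exists eta.
have [n [_ /= pa [w [Pw /= zw]]]] := Lz 0%N _ _ (near_dist p) (near_dist z).
have := Pe n w Pw; have := metric_triangle (a n) p w.
have := metric_triangle p z w; move: pa zw; rewrite (metric_sym (a n) p) /eta.
lra.
Qed.

Lemma limit_along_mdist_le {h : X -> X} {c : R} (m : nat) {P : nat -> set X}
    {z : X} :
  continuous h ->
  (forall n w, (m <= n)%N -> P n w -> d (h (a n)) (h w) <= c) ->
  limit_along P z -> d (h z) (h p) <= c.
Proof.
move=> ch Pc Lz; rewrite leNgt; apply/negP => cz.
pose eta := (d (h z) (h p) - c) / 2.
have eta0 : 0 < eta by rewrite divr_gt0 // subr_gt0.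
have near_dist c' : nbhs c' [set w | d (h c') (h w) < eta].
  exact: (metricType_numDomainType.cvgr_dist_lt (ch c') eta0).
have [n [mn /= pa [w [Pw /= zw]]]] := Lz m _ _ (near_dist p) (near_dist z).
have := Pc n w mn Pw; have := metric_triangle (h z) (h w) (h p).
have := metric_triangle (h w) (h (a n)) (h p).
move: pa zw; rewrite (metric_sym (h w) (h (a n))) (metric_sym (h (a n)) (h p)).
rewrite /eta.
lra.
Qed.

End limit_along.

Section cw_expansive_sink.
Context {R : realType} {X : metricType R}.
Local Notation d := (@mdist R X).

Definition uniformly_asymptotic (f : X -> X) (x : X) (V : set X) : Prop :=
  forall e, 0 < e -> exists N, forall n, (N <= n)%N -> forall y, V y ->
    d (iter n f x) (iter n f y) <= e.

Lemma diam_le_center {A : set X} (c : X) {r : R} :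
  (forall u, A u -> d u c <= r) -> (diam A <= (r + r)%:E)%E.
Proof.
move=> Ac; apply: ge_ereal_sup => _ [u [v [Au Av ->]]]; rewrite lee_fin.
have := metric_triangle u c v; have := Ac _ Au; have := Ac _ Av.
rewrite (metric_sym c v); lra.
Qed.

Lemma zimage_diam_le {f g : X -> X} {A : set X} (c : X) {r : R} :
  cancel f g ->
  (forall k z, A z -> d (iter k f z) (iter k f c) <= r) ->
  (forall k z, A z -> d (iter k g z) (iter k g c) <= r) ->
  forall j, (diam (zimage f j A) <= (r + r)%:E)%E.
Proof.
move=> fK Af Ag [k|k] /=.
- by apply: (diam_le_center (iter k f c)) => _ [z Az <-]; exact: Af.
- apply: (diam_le_center (iter k.+1 g c)) => u Au.
  by rewrite -[u](iter_cancel k.+1 fK); exact: Ag.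
Qed.

Lemma connected_stable_uniformly_asymptotic {f g : X -> X} {alpha : R} {x : X}
    {V : set X} :
  compact [set: X] -> cancel f g -> continuous f -> continuous g ->
  cw_expansive f alpha ->
  connected V -> V x -> V `<=` Ws_eps f (alpha / 2) x ->
  uniformly_asymptotic f x V.
Proof.
move=> cpt fK cf cg cw cV Vx VW e e0; apply: contrapT => /forallNP notN.
pose o n := iter n f x.
pose S n := iter n f @` V.
pose far n := S n `&` [set w | e < d (o n) w].
have far_often N : exists2 n, (N <= n)%N & far n !=set0.
  have /existsNP [n /not_implyP [Nn /existsNP [y /not_implyP [Vy ney]]]] :=
    notN N.
  exists n => //; exists (iter n f y); split; first by exists y.
  by rewrite /= ltNge; exact/negP.
have [p clp] : exists p : X, forall N : nat, setT N -> forall W, nbhs p W ->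
    [set o n | n in [set n | (N <= n)%N /\ far n !=set0]] `&` W !=set0.
  apply: compact_directed_cluster => //; first by exists 0%N.
  - move=> N1 N2 _ _; exists (maxn N1 N2) => // _ [n [Nn farn] <-].
    by split; exists n => //; split => //; apply: leq_trans Nn;
      rewrite ?leq_maxl ?leq_maxr.
  - by move=> N _; have [n Nn farn] := far_often N; exists (o n), n.
have far_near_p N W : nbhs p W ->
    exists n, [/\ (N <= n)%N, W (o n) & far n !=set0].
  by move=> pW; have [_ [[n [Nn farn] <-] Wn]] := clp N I W pW; exists n.
pose L := limit_along o p S.
have Lp : L p.
  move=> N W U pW pU; have [n [Nn [Wn Un] _]] := far_near_p N _ (filterI pW pU).
  by exists n; split => //; exists (o n); split => //; exists x.
have [q Lfar_q] := limit_along_nonempty cpt far_near_p.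
have Lq : L q by apply: limit_alongS Lfar_q => n w [].
have epq : e <= d p q by apply: limit_along_mdist_ge Lfar_q => n w [].
have L_continuum : continuum L.
  split; first by exists p.
    exact: subclosed_compact (limit_along_closed _) cpt (subsetT _).
  apply: limit_along_connected => // n; last by exists x.
  apply: connected_continuous_connected cV _.
  exact: continuous_subspaceT (continuous_iter n cf).
have : more_than_one_point L.
  by exists p, q; split => // epq'; move: epq; rewrite epq' mdistxx leNgt e0.
move/(cw L L_continuum); apply/negP; rewrite -leNgt [alpha]splitr.
apply: ge_ereal_sup => _ [j _ <-]; apply: (zimage_diam_le p fK) => k z Lz.
- apply: (limit_along_mdist_le 0 (continuous_iter k cf) _ Lz).
  by move=> n _ _ [y Vy <-]; rewrite -!iterD; exact: VW.
- apply: (limit_along_mdist_le k (continuous_iter k cg) _ Lz).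
  move=> n _ kn [y Vy <-]; rewrite /o -(subnKC kn) !iterD !iter_cancel //.
  exact: VW.
Qed.

Lemma nbhs_iter_mdist_le {f : X -> X} {x : X} {eps : R} (M : nat) :
  continuous f -> 0 < eps ->
  nbhs x [set y | forall n, (n < M)%N -> d (iter n f x) (iter n f y) <= eps].
Proof.
move=> cf eps0; elim: M => [|M IHM].
  by apply: (filterS _ filterT) => y _ n.
have near_M : nbhs x [set y | d (iter M f x) (iter M f y) < eps].
  have near_iterM := metricType_numDomainType.cvgr_dist_lt
    (continuous_iter M cf x) eps0.
  exact: near_iterM.
apply: (filterS _ (filterI IHM near_M)) => y [y_lt y_M] n.
by rewrite ltnS leq_eqVlt => /orP [/eqP ->|]; [exact: ltW|exact: y_lt].
Qed.

Lemma sink_of_uniformly_asymptotic {f : X -> X} {x : X} {V : set X} :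
  continuous f -> nbhs x V ->
  uniformly_asymptotic f x V -> sink f x.
Proof.
move=> cf xV unif; split.
  move=> eps eps0; have [N HN] := unif eps eps0.
  apply: (filterS _ (filterI (nbhs_iter_mdist_le N cf eps0) xV)).
  by move=> y [y_lt Vy] n; case: (ltnP n N) => nN; [exact: y_lt|exact: HN].
move: xV; rewrite -metricType_numDomainType.filter_from_mdist_nbhs.
case=> r r0 rV; exists (r / 2); first by rewrite divr_gt0.
move=> y Wy; have Vy : V y.
  apply: rV; apply: le_lt_trans (Wy 0%N) _.
  by rewrite ltr_pdivrMr // ltr_pMr // ltr1n.
apply/cvgrPdist_le => e e0; have [N HN] := unif e e0.
exists N => // n /= Nn.
by rewrite sub0r normrN ger0_norm ?mdist_ge0 //; exact: HN.
Qed.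

End cw_expansive_sink.

Theorem mainTheorem5 (R : realType) (X : metricType R) (f : X -> X) (alpha : R) :
  @peano_continuum R X -> homeomorphism f -> 0 < alpha -> cw_expansive f alpha ->
  forall x : X, sink f x <-> nbhs x (CWs_eps f (alpha / 2) x).
Proof.
move=> [cpt _ lc _] [g [fK _ cf cg]] a0 cw x; split=> [[ws _]|xCW].
- have [V [oV cV Vx VW]] := lc x _ (ws _ (divr_gt0 a0 (ltr0Sn _ 1))).
  apply: (filterS _ (open_nbhs_nbhs (conj oV Vx))).
  exact: connected_component_max.
- have [V [oV cV Vx VCW]] := lc x _ xCW.
  apply: (sink_of_uniformly_asymptotic cf (open_nbhs_nbhs (conj oV Vx))).
  apply: (connected_stable_uniformly_asymptotic cpt fK cf cg cw cV Vx).
  by move=> y /VCW; exact: connected_component_sub.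
Qed.
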